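(* Let $\Sigma$ be a language consisting only of $0$-ary predicate symbols, and let $\mathcal{T}_\Sigma$ be the family of all complete theories in $\Sigma$. If $\Sigma$ consists of $n\in\omega$ symbols, then ${\rm RS}(\mathcal{T}_\Sigma)=1$ and ${\rm ds}(\mathcal{T}_\Sigma)=2^n$. If $\Sigma$ has infinitely many symbols, then ${\rm RS}(\mathcal{T}_\Sigma)=\infty$.
   Context: Theories are complete consistent first-order theories; structures have nonempty universes. For a family $\mathcal{T}$ of theories and a sentence $\varphi$ of its language, $\mathcal{T}_\varphi=\{T\in\mathcal{T}\mid\varphi\in T\}$. The rank ${\rm RS}$ of a family is defined as follows: ${\rm RS}(\emptyset)=-1$; ${\rm RS}(\mathcal{T})=0$ for finite nonempty $\mathcal{T}$; ${\rm RS}(\mathcal{T})\ge 1$ for infinite $\mathcal{T}$; for $\alpha=\beta+1$, ${\rm RS}(\mathcal{T})\ge\alpha$ iff there are pairwise inconsistent sentences $\varphi_n$, $n\in\omega$, of the language of $\mathcal{T}$ with ${\rm RS}(\mathcal{T}_{\varphi_n})\ge\beta$ for all $n$; for limit $\alpha$, ${\rm RS}(\mathcal{T})\ge\alpha$ iff ${\rm RS}(\mathcal{T})\ge\beta$ for all $\beta<\alpha$; ${\rm RS}(\mathcal{T})=\alpha$ iff ${\rm RS}(\mathcal{T})\ge\alpha$ and not ${\rm RS}(\mathcal{T})\ge\alpha+1$; ${\rm RS}(\mathcal{T})=\infty$ if ${\rm RS}(\mathcal{T})\ge\alpha$ for every ordinal $\alpha$. If ${\rm RS}(\mathcal{T})=\alpha$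 is an ordinal $\ge0$, the degree ${\rm ds}(\mathcal{T})$ is the maximal number of pairwise inconsistent sentences $\varphi_i$ with ${\rm RS}(\mathcal{T}_{\varphi_i})=\alpha$. *)

From Stdlib Require Import Arith List.
Set Implicit Arguments.

Inductive form (I : Type) : Type :=
| FFalse : form I
| FPred  : I -> form I
| FEq    : nat -> nat -> form I
| FNot   : form I -> form I
| FImp   : form I -> form I -> form I
| FAnd   : form I -> form I -> form I
| FOr    : form I -> form I -> form I
| FAll   : nat -> form I -> form I
| FEx    : nat -> form I -> form I.
Arguments FFalse {I}.
Arguments FPred {I}.
Arguments FEq {I}.
Arguments FNot {I}.
Arguments FImp {I}.
Arguments FAnd {I}.
Arguments FOr {I}.
Arguments FAll {I}.
Arguments FEx {I}.

Fixpoint free {I : Type} (p : form I) (x : nat) : Prop :=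
  match p with
  | FFalse => False
  | FPred _ => False
  | FEq y z => x = y \/ x = z
  | FNot q => free q x
  | FImp q r | FAnd q r | FOr q r => free q x \/ free r x
  | FAll y q | FEx y q => x <> y /\ free q x
  end.

Definition closed {I : Type} (p : form I) : Prop := forall x, ~ free p x.

Record structure (I : Type) := {
  carrier : Type;
  point : carrier;                (* the universe is nonempty *)
  interp : I -> Prop
}.

Definition upd {M : Type} (e : nat -> M) (x : nat) (d : M) : nat -> M :=
  fun y => if Nat.eqb y x then d else e y.

Fixpoint sat {I : Type} (S : structure I) (e : nat -> carrier S) (p : form I) : Prop :=
  match p with
  | FFalse => False
  | FPred i => interp S i
  | FEq x y => e x = e y
  | FNot q => ~ sat S e q
  | FImp q r => sat S e q -> sat S e r
  | FAnd q r => sat S e q /\ sat S e r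
  | FOr q r => sat S e q \/ sat S e r
  | FAll x q => forall d : carrier S, sat S (upd e x d) q
  | FEx x q => exists d : carrier S, sat S (upd e x d) q
  end.

Definition theory (I : Type) := form I -> Prop.

Definition Th {I : Type} (S : structure I) : theory I :=
  fun p => closed p /\ forall e : nat -> carrier S, sat S e p.

Definition family (I : Type) := theory I -> Prop.

(* T_Sigma: the family of all complete (consistent) theories in Sigma,
   i.e. all theories of structures. *)
Definition T_Sigma (I : Type) : family I := fun T => exists S : structure I, T = Th S.
Arguments T_Sigma I : clear implicits.

Definition subfamily {I : Type} (F : family I) (p : form I) : family I :=
  fun T => F T /\ T p.

Definition family_finite {I : Type} (F : family I) : Prop :=
  exists L : list (theory I), forall T, F T ->
    exists T', In T' L /\ forall p, T p <-> T' p.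
Definition family_infinite {I : Type} (F : family I) : Prop := ~ family_finite F.

Definition inconsistent {I : Type} (p q : form I) : Prop :=
  forall (S : structure I) (e : nat -> carrier S), ~ (sat S e p /\ sat S e q).

Definition pw_inconsistent {I : Type} (phi : nat -> form I) : Prop :=
  (forall n, closed (phi n)) /\
  (forall n m, n <> m -> inconsistent (phi n) (phi m)).

Definition pw_inconsistent_fin {I : Type} (k : nat) (phi : nat -> form I) : Prop :=
  (forall i, i < k -> closed (phi i)) /\
  (forall i j, i < k -> j < k -> i <> j -> inconsistent (phi i) (phi j)).

(* ---------- Ordinals (Brouwer trees with limits indexed by arbitrary
   nonempty types) ---------- *)
Inductive Ord : Type :=
| OZ : Ord
| OS : Ord -> Ord
| OL : forall (A : Type), A -> (A -> Ord) -> Ord.   (* supremum of f over nonempty A *)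

Definition Oone : Ord := OS OZ.

Fixpoint RS_ge {I : Type} (a : Ord) (F : family I) : Prop :=
  match a with
  | OZ => exists T, F T                         (* RS(emptyset) = -1 *)
  | OS OZ => family_infinite F
  | OS b => exists phi : nat -> form I,
              pw_inconsistent phi /\ forall n, RS_ge b (subfamily F (phi n))
  | @OL A _ f => forall x : A, RS_ge (f x) F
  end.

Definition RS_eq {I : Type} (F : family I) (a : Ord) : Prop :=
  RS_ge a F /\ ~ RS_ge (OS a) F.

Definition RS_infty {I : Type} (F : family I) : Prop := forall a : Ord, RS_ge a F.

Definition ds_eq {I : Type} (F : family I) (a : Ord) (d : nat) : Prop :=
  (exists phi : nat -> form I, pw_inconsistent_fin d phi /\
     forall i, i < d -> RS_eq (subfamily F (phi i)) a) /\
  (forall (k : nat) (phi : nat -> form I), pw_inconsistent_fin k phi ->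
     (forall i, i < k -> RS_eq (subfamily F (phi i)) a) -> k <= d).

Definition has_card (I : Type) (n : nat) : Prop :=
  exists (f : I -> nat) (g : nat -> I),
    (forall i, f i < n) /\ (forall i, g (f i) = i) /\ (forall k, k < n -> f (g k) = k).

Definition type_finite (I : Type) : Prop := exists L : list I, forall i, In i L.

(* Over a signature of propositional constants, a sentence whose formula uses k
   variables cannot tell apart two structures that interpret the constants alike
   and both have at least k elements: a back-and-forth on assignments preserving
   the equality pattern of the variables.  Structures with fewer than k elements
   realise only finitely many theories, so if T_phi is infinite then phi holds in
   every large structure with some fixed truth assignment v_phi, and pairwise
   inconsistent such sentences have distinct v_phi.  With n constants there are
   2^n truth assignments, whence RS = 1; the 2^n complete diagrams, which have
   models of every finite size, show ds = 2^n.  With infinitely many constants,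
   the families obtained by fixing the constants of a co-infinite set split into
   the pairwise inconsistent pieces c_0 /\ ... /\ c_(m-1) /\ ~ c_m on fresh
   constants, each again such a family, so RS >= a for every ordinal a. *)

From Stdlib Require Import Arith List Lia ClassicalEpsilon FinFun Peano_dec.
Import ListNotations.

Lemma upd_eq {M : Type} (e : nat -> M) x d : upd e x d x = d.
Proof. unfold upd; rewrite Nat.eqb_refl; reflexivity. Qed.

Lemma upd_neq {M : Type} (e : nat -> M) x d y : y <> x -> upd e x d y = e y.
Proof. intro Hyx; unfold upd; apply Nat.eqb_neq in Hyx; rewrite Hyx; reflexivity. Qed.

Lemma upd_same {M : Type} (e : nat -> M) x y : upd e x (e x) y = e y.
Proof. unfold upd; destruct (Nat.eqb_spec y x); subst; reflexivity. Qed.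

Definition valid {I : Type} (S : structure I) (p : form I) : Prop := forall e, sat S e p.

Definition bigand {I X : Type} (F : X -> form I) (l : list X) : form I :=
  fold_right (fun x q => FAnd (F x) q) (FNot FFalse) l.

Lemma sat_bigand {I X : Type} (S : structure I) e (F : X -> form I) l :
  sat S e (bigand F l) <-> forall x, In x l -> sat S e (F x).
Proof.
  induction l as [|x l IH]; simpl; [tauto|]. rewrite IH.
  split; [intros [Hx Hl] y [<-|Hy]; auto | intro H; split; auto].
Qed.

Lemma free_bigand {I X : Type} (F : X -> form I) l y :
  free (bigand F l) y -> exists x, In x l /\ free (F x) y.
Proof.
  induction l as [|x l IH]; simpl; [tauto|].
  intros [Hy|Hy]; [exists x; auto | destruct (IH Hy) as [z [Hz Hfz]]; exists z; auto].
Qed.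

Lemma closed_bigand {I X : Type} (F : X -> form I) l :
  (forall x, In x l -> closed (F x)) -> closed (bigand F l).
Proof. intros H y Hy; destruct (free_bigand F l y Hy) as [x [Hx Hfx]]; exact (H x Hx y Hfx). Qed.

Definition nat_structure {I : Type} (v : I -> Prop) : structure I :=
  {| carrier := nat; point := 0; interp := v |}.

Definition fin_structure {I : Type} (s : nat) (v : I -> Prop) : structure I :=
  {| carrier := {m : nat | m <= s}; point := exist _ 0 (Nat.le_0_l s); interp := v |}.

Section Bijection.
Variables (I : Type) (M N : structure I) (h : carrier M -> carrier N).
Hypotheses (h_inj : forall x y, h x = h y -> x = y) (h_surj : forall y, exists x, h x = y)
  (same_interp : forall i, interp M i <-> interp N i).

Lemma sat_bij p : forall e e', (forall x, h (e x) = e' x) -> (sat M e p <-> sat N e' p).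
Proof.
  assert (Hupd : forall e e' x d, (forall y, h (e y) = e' y) ->
            forall y, h (upd e x d y) = upd e' x (h d) y).
  { intros e e' x d He y; unfold upd; destruct (y =? x); auto. }
  induction p as [| i | x y | q IH | q IHq r IHr | q IHq r IHr | q IHq r IHr | x q IH | x q IH];
    intros e e' He; simpl.
  - tauto.
  - apply same_interp.
  - rewrite <- !He; split; [congruence | apply h_inj].
  - rewrite (IH e e' He); tauto.
  - rewrite (IHq e e' He), (IHr e e' He); tauto.
  - rewrite (IHq e e' He), (IHr e e' He); tauto.
  - rewrite (IHq e e' He), (IHr e e' He); tauto.
  - split; intros H d.
    + destruct (h_surj d) as [c <-]. apply (IH (upd e x c)); auto.
    + apply (IH _ (upd e' x (h d))); auto.
  - split; intros [d H].
    + exists (h d). apply (IH (upd e x d)); auto.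
    + destruct (h_surj d) as [c <-]. exists c. apply (IH _ (upd e' x (h c))); auto.
Qed.

Lemma Th_bij p : Th M p <-> Th N p.
Proof.
  unfold Th; enough (valid M p <-> valid N p) by (unfold valid in *; tauto).
  split; intros H e'.
  - destruct (choice (fun y x => h x = e' y) (fun y => h_surj (e' y))) as [e He].
    apply (sat_bij p e e' He), H.
  - apply (sat_bij p e' (fun y => h (e' y))); auto.
Qed.

End Bijection.

Definition has_distinct (M : Type) (k : nat) : Prop :=
  exists l : list M, length l = k /\ NoDup l.

Lemma has_distinct_fresh (M : Type) k :
  has_distinct M k -> forall l : list M, length l < k -> exists d, ~ In d l.
Proof.
  intros [m [Hm Hnd]] l Hl. apply NNPP; intro Hnone.
  assert (Hincl : incl m l) by (intros d _; apply NNPP; intro Hd; apply Hnone; exists d; exact Hd).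
  pose proof (NoDup_incl_length Hnd Hincl). lia.
Qed.

Lemma has_distinct_nat k : has_distinct nat k.
Proof. exists (seq 0 k); split; [apply length_seq | apply seq_NoDup]. Qed.

Lemma not_has_distinct_cover (M : Type) k : ~ has_distinct M k ->
  exists l : list M, NoDup l /\ (forall x, In x l) /\ length l < k.
Proof.
  intro Hk.
  enough (G : forall r (l : list M), length l + r = k -> NoDup l ->
            exists l', NoDup l' /\ (forall x, In x l') /\ length l' < k)
    by (apply (G k []); [reflexivity | constructor]).
  induction r as [|r IH]; intros l Hl Hnd.
  - exfalso; apply Hk; exists l; split; [lia | exact Hnd].
  - destruct (classic (forall x, In x l)) as [Hcov | Hcov].
    + exists l; repeat split; auto; lia.
    + apply not_all_ex_not in Hcov as [x Hx].
      apply (IH (x :: l)); simpl; [lia | constructor; auto].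
Qed.

(* [at_least_from j m] says that there are [j] distinct elements, all different
   from the values of the variables [0, ..., m-1]. *)
Fixpoint at_least_from {I : Type} (j m : nat) : form I :=
  match j with
  | 0 => FNot FFalse
  | S j' => FEx m (FAnd (bigand (fun k => FNot (FEq k m)) (seq 0 m)) (at_least_from j' (S m)))
  end.

Definition at_least {I : Type} (j : nat) : form I := at_least_from j 0.

Lemma sat_at_least_from {I : Type} (M : structure I) j : forall m e,
  sat M e (at_least_from j m) <-> exists l : list (carrier M),
    length l = j /\ NoDup l /\ forall d, In d l -> forall i, i < m -> d <> e i.
Proof.
  induction j as [|j IH]; intros m e; simpl.
  - split; [intros _; exists []; repeat split; [constructor | intros d []] | intros _ f; exact f].
  - setoid_rewrite sat_bigand. setoid_rewrite in_seq. split.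
    + intros [d [Hd Hrest]]. apply IH in Hrest as [l [Hl [Hnd Hout]]].
      exists (d :: l); split; [simpl; lia|]; split.
      * constructor; [|exact Hnd]. intro Hdl. apply (Hout d Hdl m); [lia | now rewrite upd_eq].
      * intros d' [<- | Hd'] i Hi.
        -- specialize (Hd i (conj (Nat.le_0_l i) Hi)). simpl in Hd.
           rewrite upd_neq, upd_eq in Hd by lia. congruence.
        -- specialize (Hout d' Hd' i ltac:(lia)). rewrite upd_neq in Hout by lia. exact Hout.
    + intros [[|d l] [Hl [Hnd Hout]]]; [discriminate|].
      inversion Hnd as [|? ? Hdl Hnd']; subst.
      exists d; split.
      * intros k Hk. simpl. rewrite upd_neq, upd_eq by lia.
        intro E; apply (Hout d (or_introl eq_refl) k); [lia | congruence].
      * apply IH. exists l; repeat split; auto.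
        intros d' Hd' i Hi. destruct (Nat.eq_dec i m) as [-> | Him].
        -- rewrite upd_eq. intros ->; contradiction.
        -- rewrite upd_neq by exact Him. apply Hout; [right; exact Hd' | lia].
Qed.

Lemma sat_at_least {I : Type} (M : structure I) e j :
  sat M e (at_least j) <-> has_distinct (carrier M) j.
Proof.
  unfold at_least; rewrite sat_at_least_from. split.
  - intros [l [Hl [Hnd _]]]; exists l; auto.
  - intros [l [Hl Hnd]]; exists l; repeat split; auto; lia.
Qed.

Lemma closed_at_least {I : Type} j : closed (@at_least I j).
Proof.
  enough (H : forall m x, free (@at_least_from I j m) x -> x < m)
    by (intros x Hx; apply H in Hx; lia).
  induction j as [|j IH]; intros m x; simpl; [tauto|].
  intros [Hxm [Hx | Hx]]; [|apply IH in Hx; lia].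
  destruct (free_bigand _ _ _ Hx) as [k [Hk Hfk]]. apply in_seq in Hk. simpl in Hfk. lia.
Qed.

Fixpoint vars {I : Type} (p : form I) : list nat :=
  match p with
  | FFalse | FPred _ => []
  | FEq x y => [x; y]
  | FNot q => vars q
  | FImp q r | FAnd q r | FOr q r => vars q ++ vars r
  | FAll x q | FEx x q => x :: vars q
  end.

Definition agree {M N : Type} (e : nat -> M) (e' : nat -> N) (L : list nat) : Prop :=
  forall x y, In x L -> In y L -> (e x = e y <-> e' x = e' y).

Section Agree.
Context {M N : Type} {e : nat -> M} {e' : nat -> N}.

Lemma agree_sym {L} : agree e e' L -> agree e' e L.
Proof. intros H x y Hx Hy; specialize (H x y Hx Hy); tauto. Qed.

Lemma agree_app {L1 L2} : agree e e' (L1 ++ L2) -> agree e e' L1 /\ agree e e' L2.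
Proof. intro H; split; intros x y Hx Hy; apply H; apply in_or_app; auto. Qed.

Lemma agree_cons {x L} : agree e e' (x :: L) -> agree e e' L.
Proof. intros H y z Hy Hz; apply H; right; assumption. Qed.

Lemma agree_upd L x d d' : agree e e' L ->
  (forall y, In y L -> y <> x -> (e y = d <-> e' y = d')) ->
  agree (upd e x d) (upd e' x d') (x :: L).
Proof.
  intros Hag Hd a b Ha Hb. unfold upd.
  destruct (Nat.eqb_spec a x), (Nat.eqb_spec b x); subst.
  - tauto.
  - destruct Hb as [Hb|Hb]; [congruence|].
    specialize (Hd b Hb ltac:(assumption)). split; intro; symmetry; apply Hd; auto.
  - destruct Ha as [Ha|Ha]; [congruence|]. apply Hd; auto.
  - destruct Ha as [Ha|Ha]; [congruence|]. destruct Hb as [Hb|Hb]; [congruence|].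
    apply Hag; auto.
Qed.

(* The back-and-forth step: a new value on the left is matched on the right
   either by the partner of an old value or by a fresh element. *)
Lemma agree_upd_ex {L} x d {k} : agree e e' L -> has_distinct N k -> length L < k ->
  exists d', agree (upd e x d) (upd e' x d') (x :: L).
Proof.
  intros Hag HN HL.
  destruct (classic (exists y, In y L /\ y <> x /\ e y = d)) as [[y0 [Hy0 [_ <-]]] | Hnew].
  - exists (e' y0). apply agree_upd; auto.
  - destruct (has_distinct_fresh _ _ HN (map e' L)) as [d' Hd']; [rewrite length_map; exact HL|].
    exists d'. apply agree_upd; auto. intros y Hy Hyx. split; intro E.
    + exfalso; apply Hnew; eauto.
    + exfalso; apply Hd'; rewrite <- E; apply in_map; exact Hy.
Qed.

End Agree.

Lemma agree_ex {M N : Type} (m0 : M) k (L : list nat) :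
  has_distinct M k -> length L <= k -> forall e' : nat -> N, exists e : nat -> M, agree e e' L.
Proof.
  intros HM. induction L as [|x L IH]; intros HL e'.
  - exists (fun _ => m0). intros x y [].
  - destruct (IH ltac:(simpl in HL; lia) e') as [e He].
    destruct (agree_upd_ex x (e' x) (agree_sym He) HM ltac:(simpl in HL; lia))
      as [d Hd].
    exists (upd e x d). apply agree_sym. intros y z Hy Hz.
    rewrite <- (upd_same e' x y), <- (upd_same e' x z).
    apply Hd; assumption.
Qed.

Section Transfer.
Variables (I : Type) (M N : structure I).
Hypothesis same_interp : forall i, interp M i <-> interp N i.

Lemma sat_agree p : forall k e e', length (vars p) <= k ->
  has_distinct (carrier M) k -> has_distinct (carrier N) k ->
  agree e e' (vars p) -> (sat M e p <-> sat N e' p).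
Proof.
  induction p as [| i | x y | q IH | q IHq r IHr | q IHq r IHr | q IHq r IHr | x q IH | x q IH];
    intros k e e' Hk HM HN Hag; simpl in *.
  - tauto.
  - apply same_interp.
  - apply Hag; simpl; auto.
  - rewrite (IH k e e'); tauto.
  - rewrite length_app in Hk; destruct (agree_app Hag) as [Hq Hr].
    rewrite (IHq k e e'), (IHr k e e') by (assumption || lia); tauto.
  - rewrite length_app in Hk; destruct (agree_app Hag) as [Hq Hr].
    rewrite (IHq k e e'), (IHr k e e') by (assumption || lia); tauto.
  - rewrite length_app in Hk; destruct (agree_app Hag) as [Hq Hr].
    rewrite (IHq k e e'), (IHr k e e') by (assumption || lia); tauto.
  - assert (Hq : length (vars q) < k) by lia.
    pose proof (agree_cons Hag) as Hag'.
    split; intros H d.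
    + destruct (agree_upd_ex x d (agree_sym Hag') HM Hq) as [c Hc].
      apply (IH k _ _ ltac:(lia) HM HN (agree_sym (agree_cons Hc))), H.
    + destruct (agree_upd_ex x d Hag' HN Hq) as [c Hc].
      apply (IH k _ _ ltac:(lia) HM HN (agree_cons Hc)), H.
  - assert (Hq : length (vars q) < k) by lia.
    pose proof (agree_cons Hag) as Hag'.
    split; intros [d H].
    + destruct (agree_upd_ex x d Hag' HN Hq) as [c Hc].
      exists c. apply (IH k _ _ ltac:(lia) HM HN (agree_cons Hc)), H.
    + destruct (agree_upd_ex x d (agree_sym Hag') HM Hq) as [c Hc].
      exists c. apply (IH k _ _ ltac:(lia) HM HN (agree_sym (agree_cons Hc))), H.
Qed.

Lemma valid_transfer p :
  has_distinct (carrier M) (length (vars p)) -> has_distinct (carrier N) (length (vars p)) ->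
  valid M p -> valid N p.
Proof.
  intros HM HN H e'.
  destruct (agree_ex (point M) _ (vars p) HM (le_n _) e') as [e He].
  apply (sat_agree p _ e e' (le_n _) HM HN He), H.
Qed.

End Transfer.

Lemma fin_structure_eq {I : Type} s (v : I -> Prop) (a b : carrier (fin_structure s v)) :
  proj1_sig a = proj1_sig b -> a = b.
Proof. destruct a as [a Ha], b as [b Hb]; simpl; intros ->; f_equal; apply le_unique. Qed.

Lemma has_distinct_fin_structure {I : Type} s (v : I -> Prop) j :
  has_distinct (carrier (fin_structure s v)) j <-> j <= S s.
Proof.
  split.
  - intros [l [<- Hnd]].
    enough (length (map (@proj1_sig _ (fun m => m <= s)) l) <= length (seq 0 (S s)))
      by (rewrite length_map, length_seq in *; assumption).
    apply NoDup_incl_length.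
    + apply Injective_map_NoDup; [intros a b; apply (fin_structure_eq s v) | exact Hnd].
    + intros m Hm. apply in_map_iff in Hm as [[m' Hm'] [<- _]]. apply in_seq; simpl; lia.
  - intro Hj. set (to_fin := fun m => exist (fun m => m <= s) (Nat.min m s) (Nat.le_min_r m s)).
    exists (map to_fin (seq 0 j)); split; [rewrite length_map; apply length_seq|].
    apply (NoDup_map_inv (@proj1_sig _ _)). rewrite map_map.
    rewrite (map_ext_in _ (fun m => m)), map_id; [apply seq_NoDup|].
    intros m Hm. apply in_seq in Hm. simpl; lia.
Qed.

Lemma Th_fin_structure_at_least {I : Type} s (v : I -> Prop) j :
  Th (fin_structure s v) (at_least j) <-> j <= S s.
Proof.
  rewrite <- has_distinct_fin_structure with (v := v). unfold Th.
  setoid_rewrite sat_at_least. split.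
  - intros [_ H]. exact (H (fun _ => point _)).
  - intro H. split; [apply closed_at_least | intros _; exact H].
Qed.

Lemma Th_fin_structure_inj {I : Type} (v : I -> Prop) s1 s2 :
  (forall p, Th (fin_structure s1 v) p <-> Th (fin_structure s2 v) p) -> s1 = s2.
Proof.
  intro H.
  assert (Hle : forall a b,
            (forall p, Th (fin_structure a v) p -> Th (fin_structure b v) p) -> a <= b).
  { intros a b Hab.
    apply le_S_n, (Th_fin_structure_at_least b v), Hab, Th_fin_structure_at_least, le_n. }
  apply Nat.le_antisymm; apply Hle; intro p; [apply (proj1 (H p)) | apply (proj2 (H p))].
Qed.

Lemma Th_fin_structure_cover {I : Type} (M : structure I) (l : list (carrier M)) s (v : I -> Prop) :
  NoDup l -> (forall x, In x l) -> length l = S s -> (forall i, interp M i <-> v i) ->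
  forall p, Th M p <-> Th (fin_structure s v) p.
Proof.
  intros Hnd Hcov Hlen Hv p. symmetry.
  apply (Th_bij _ (fin_structure s v) M (fun c => nth (proj1_sig c) l (point M))).
  - intros [a Ha] [b Hb] E. apply (fin_structure_eq s v); simpl.
    apply (proj1 (NoDup_nth l (point M)) Hnd); [lia | lia | exact E].
  - intro x. destruct (In_nth l x (point M) (Hcov x)) as [m [Hm E]].
    assert (Hms : m <= s) by lia. exists (exist _ m Hms); exact E.
  - intro i; symmetry; apply Hv.
Qed.

Lemma family_infinite_of_inj {I : Type} (F : family I) (t : nat -> theory I) :
  (forall s, F (t s)) -> (forall s1 s2, (forall p, t s1 p <-> t s2 p) -> s1 = s2) ->
  family_infinite F.
Proof.
  intros Ht Hinj [L HL].
  assert (Hbound : forall L : list (theory I), exists B,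
            forall s T, In T L -> (forall p, t s p <-> T p) -> s < B).
  { induction L0 as [|T0 L0 [B HB]].
    - exists 0; intros s T [].
    - destruct (classic (exists s0, forall p, t s0 p <-> T0 p)) as [[s0 Hs0] | Hno].
      + exists (Nat.max B (S s0)). intros s T [<- | HT] HsT.
        * enough (s = s0) by lia. apply Hinj; intro p; rewrite HsT, Hs0; reflexivity.
        * specialize (HB s T HT HsT); lia.
      + exists B. intros s T [<- | HT] HsT; [exfalso; eauto | eauto]. }
  destruct (Hbound L) as [B HB]. destruct (HL _ (Ht B)) as [T [HT HBT]].
  specialize (HB B T HT HBT); lia.
Qed.

Lemma family_infinite_fin_structures {I : Type} (v : I -> Prop) (F : family I) :
  (forall s, F (Th (fin_structure s v))) -> family_infinite F.
Proof. intro H; apply (family_infinite_of_inj F _ H), Th_fin_structure_inj. Qed.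

Fixpoint bitlists (n : nat) : list (list bool) :=
  match n with
  | 0 => [[]]
  | S n' => map (cons true) (bitlists n') ++ map (cons false) (bitlists n')
  end.

Lemma length_bitlists n : length (bitlists n) = 2 ^ n.
Proof. induction n as [|n IH]; simpl; [reflexivity|]. rewrite length_app, !length_map, IH; lia. Qed.

Lemma in_bitlists n bl : In bl (bitlists n) <-> length bl = n.
Proof.
  revert bl; induction n as [|n IH]; intros bl; simpl.
  - split; [intros [<- | []]; reflexivity | destruct bl; [left; reflexivity | discriminate]].
  - rewrite in_app_iff, !in_map_iff. split.
    + intros [[bl' [<- H]] | [bl' [<- H]]]; simpl; f_equal; apply IH, H.
    + destruct bl as [|b bl]; [discriminate|]. intros [= H]. apply IH in H.
      destruct b; [left | right]; eauto.
Qed.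

Lemma NoDup_bitlists n : NoDup (bitlists n).
Proof.
  induction n as [|n IH]; simpl; [repeat constructor; intros []|].
  apply NoDup_app; try (apply Injective_map_NoDup; [intros x y E; injection E; auto | exact IH]).
  intros bl H1 H2. apply in_map_iff in H1 as [x [<- _]], H2 as [y [E _]]. discriminate.
Qed.

Definition literal {I : Type} (i : I) (b : bool) : form I := if b then FPred i else FNot (FPred i).

Section FiniteSignature.
Variables (I : Type) (n : nat) (f : I -> nat) (g : nat -> I).
Hypotheses (f_lt : forall i, f i < n) (g_f : forall i, g (f i) = i)
  (f_g : forall k, k < n -> f (g k) = k).

Definition of_bits (bl : list bool) : I -> Prop := fun i => nth (f i) bl false = true.

Definition bits (v : I -> Prop) : list bool :=
  map (fun k => if excluded_middle_informative (v (g k)) then true else false) (seq 0 n).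

Lemma in_bitlists_bits v : In (bits v) (bitlists n).
Proof. apply in_bitlists; unfold bits; rewrite length_map; apply length_seq. Qed.

Lemma of_bits_bits v i : of_bits (bits v) i <-> v i.
Proof.
  assert (Hnth : forall h : nat -> bool, nth (f i) (map h (seq 0 n)) false = h (f i)).
  { intro h. rewrite nth_indep with (d' := h 0) by (rewrite length_map, length_seq; apply f_lt).
    rewrite map_nth, seq_nth by apply f_lt. reflexivity. }
  unfold of_bits, bits. rewrite Hnth, g_f.
  destruct (excluded_middle_informative (v i)); intuition discriminate.
Qed.

Lemma of_bits_inj bl bl' : length bl = n -> length bl' = n ->
  (forall i, of_bits bl i <-> of_bits bl' i) -> bl = bl'.
Proof.
  intros Hbl Hbl' H. apply nth_ext with false false; [congruence|].
  intros k Hk. specialize (H (g k)). unfold of_bits in H. rewrite f_g in H by lia.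
  destruct (nth k bl false), (nth k bl' false); intuition discriminate.
Qed.

Lemma small_theories_finite k :
  family_finite (fun T => exists S : structure I, T = Th S /\ ~ has_distinct (carrier S) k).
Proof.
  exists (flat_map (fun s => map (fun bl => Th (fin_structure s (of_bits bl))) (bitlists n))
                   (seq 0 k)).
  intros T [S [-> HS]].
  destruct (not_has_distinct_cover _ _ HS) as [[|x l] [Hnd [Hcov Hlen]]];
    [destruct (Hcov (point S))|].
  exists (Th (fin_structure (length l) (of_bits (bits (interp S))))). split.
  - apply in_flat_map. exists (length l). split; [apply in_seq; simpl in Hlen; lia|].
    apply (in_map (fun bl => Th (fin_structure (length l) (of_bits bl)))), in_bitlists_bits.
  - apply (Th_fin_structure_cover S (x :: l)); auto.
    intro i; symmetry; apply of_bits_bits.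
Qed.

Lemma infinite_subfamily_large_model p k : family_infinite (subfamily (T_Sigma I) p) ->
  exists S : structure I, valid S p /\ has_distinct (carrier S) k.
Proof.
  intro Hinf. apply NNPP; intro Hno. apply Hinf.
  destruct (small_theories_finite k) as [L HL]. exists L.
  intros T [[S ->] [_ Hp]]. apply HL. exists S; split; [reflexivity|].
  intro Hk. apply Hno. exists S; split; assumption.
Qed.

Lemma infinite_subfamily_coded_model p : family_infinite (subfamily (T_Sigma I) p) ->
  exists bl, In bl (bitlists n) /\ valid (nat_structure (of_bits bl)) p.
Proof.
  intro Hinf. destruct (infinite_subfamily_large_model p (length (vars p)) Hinf) as [S [Hp HS]].
  exists (bits (interp S)). split; [apply in_bitlists_bits|].
  apply (valid_transfer I S); auto.
  - intro i; symmetry; apply of_bits_bits.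
  - apply has_distinct_nat.
Qed.

Lemma infinite_pw_inconsistent_bound k (phi : nat -> form I) :
  (forall i j, i < k -> j < k -> i <> j -> inconsistent (phi i) (phi j)) ->
  (forall i, i < k -> family_infinite (subfamily (T_Sigma I) (phi i))) -> k <= 2 ^ n.
Proof.
  intros Hinc Hinf.
  destruct (choice (fun i bl =>
              i < k -> In bl (bitlists n) /\ valid (nat_structure (of_bits bl)) (phi i)))
    as [B HB].
  { intro i. destruct (lt_dec i k) as [Hi | Hi].
    - destruct (infinite_subfamily_coded_model (phi i) (Hinf i Hi)) as [bl Hbl]. exists bl; auto.
    - exists []; intro; contradiction. }
  enough (length (map B (seq 0 k)) <= length (bitlists n))
    by (rewrite length_map, length_seq, length_bitlists in *; assumption).
  apply NoDup_incl_length.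
  - apply Injective_map_NoDup_in; [|apply seq_NoDup].
    intros i j Hi Hj E. apply in_seq in Hi, Hj. apply NNPP; intro Hij.
    apply (Hinc i j ltac:(lia) ltac:(lia) Hij (nat_structure (of_bits (B i))) (fun _ => 0)).
    split; [apply HB; lia | rewrite E; apply HB; lia].
  - intros bl Hbl. apply in_map_iff in Hbl as [i [<- Hi]]. apply in_seq in Hi. apply HB; lia.
Qed.

Lemma not_RS_ge_two (F : family I) : (forall T, F T -> T_Sigma I T) -> ~ RS_ge (OS Oone) F.
Proof.
  intros HF [phi [[_ Hinc] Hinf]].
  enough (S (2 ^ n) <= 2 ^ n) by lia.
  apply (infinite_pw_inconsistent_bound _ phi).
  - intros i j _ _; apply Hinc.
  - intros i _ [L HL]. apply (Hinf i). exists L. intros T [HT Hp]. apply HL. split; auto.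
Qed.

Lemma RS_eq_one (v : I -> Prop) (F : family I) :
  (forall s, F (Th (fin_structure s v))) -> (forall T, F T -> T_Sigma I T) -> RS_eq F Oone.
Proof.
  intros Hfin HF.
  split; [exact (family_infinite_fin_structures v F Hfin) | exact (not_RS_ge_two F HF)].
Qed.

Definition diagram (bl : list bool) : form I :=
  bigand (fun k => literal (g k) (nth k bl false)) (seq 0 n).

Lemma closed_diagram bl : closed (diagram bl).
Proof.
  apply closed_bigand; intros k _ x; unfold literal; destruct (nth k bl false); simpl; tauto.
Qed.

Lemma sat_diagram (S : structure I) e bl :
  sat S e (diagram bl) <-> forall i, interp S i <-> of_bits bl i.
Proof.
  unfold diagram, of_bits; rewrite sat_bigand.
  assert (Hlit : forall i b, sat S e (literal i b) <-> (interp S i <-> b = true))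
    by (intros i [|]; simpl; intuition discriminate).
  split.
  - intros H i. rewrite <- (g_f i) at 1. apply Hlit, H, in_seq. split; [lia | apply f_lt].
  - intros H k Hk. apply in_seq in Hk. apply Hlit. rewrite H, f_g by lia. reflexivity.
Qed.

Lemma RS_eq_diagram bl : RS_eq (subfamily (T_Sigma I) (diagram bl)) Oone.
Proof.
  apply (RS_eq_one (of_bits bl)).
  - intro s. split; [exists (fin_structure s (of_bits bl)); reflexivity|].
    split; [apply closed_diagram | intro e; apply sat_diagram; reflexivity].
  - intros T [HT _]; exact HT.
Qed.

Lemma RS_eq_T_Sigma : RS_eq (T_Sigma I) Oone.
Proof. apply (RS_eq_one (fun _ => False)); [intro s; eexists; reflexivity | auto]. Qed.

Lemma ds_eq_T_Sigma : ds_eq (T_Sigma I) Oone (2 ^ n).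
Proof.
  split.
  - exists (fun i => diagram (nth i (bitlists n) [])). split; [split|].
    + intros i _; apply closed_diagram.
    + intros i j Hi Hj Hij S e [Hbi Hbj]. rewrite sat_diagram in Hbi, Hbj.
      rewrite <- length_bitlists in Hi, Hj. apply Hij.
      apply (proj1 (NoDup_nth (bitlists n) []) (NoDup_bitlists n)); auto.
      apply of_bits_inj; [apply in_bitlists, nth_In; assumption .. |].
      intro a; rewrite <- (Hbi a); apply Hbj.
    + intros i _; apply RS_eq_diagram.
  - intros k phi [_ Hinc] HRS. apply (infinite_pw_inconsistent_bound k phi Hinc).
    intros i Hi; exact (proj1 (HRS i Hi)).
Qed.

End FiniteSignature.

Definition coinfinite {I : Type} (A : I -> Prop) : Prop :=
  forall l : list I, exists i, ~ In i l /\ ~ A i.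

Definition constrained_by {I : Type} (A w : I -> Prop) : family I :=
  fun T => exists S, T = Th S /\ forall i, A i -> (interp S i <-> w i).

Definition coinfinitely_constrained {I : Type} (F : family I) : Prop :=
  exists A w, coinfinite A /\ forall T, F T <-> constrained_by A w T.

Lemma coinfinite_fresh_seq {I : Type} (A : I -> Prop) : coinfinite A ->
  exists a : nat -> I, (forall k, ~ A (a k)) /\ (forall k m, a k = a m -> k = m).
Proof.
  intro HA. destruct (choice _ HA) as [fresh Hfresh].
  pose (prefix :=
    fix prefix k := match k with 0 => [] | S k' => fresh (prefix k') :: prefix k' end).
  exists (fun k => fresh (prefix k)). split; [intro k; apply Hfresh|].
  assert (Hin : forall k m, k < m -> In (fresh (prefix k)) (prefix m)).
  { intros k m; induction m as [|m IH]; intro Hkm; simpl; [lia|].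
    destruct (Nat.eq_dec k m) as [-> | Hkm']; [left; reflexivity | right; apply IH; lia]. }
  intros k m E.
  destruct (Nat.lt_trichotomy k m) as [Hlt | [Heq | Hgt]]; [exfalso | exact Heq | exfalso].
  - apply (proj1 (Hfresh (prefix m))). rewrite <- E. apply Hin, Hlt.
  - apply (proj1 (Hfresh (prefix k))). rewrite E. apply Hin, Hgt.
Qed.

Section Splitting.
Variables (I : Type) (A w : I -> Prop) (a : nat -> I).
Hypotheses (A_coinf : coinfinite A) (a_notin : forall k, ~ A (a k))
  (a_inj : forall k m, a k = a m -> k = m).

Definition split_sentence (m : nat) : form I :=
  FAnd (bigand (fun j => FPred (a j)) (seq 0 m)) (FNot (FPred (a m))).

Lemma sat_split_sentence (S : structure I) e m :
  sat S e (split_sentence m) <-> (forall j, j < m -> interp S (a j)) /\ ~ interp S (a m).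
Proof.
  simpl; rewrite sat_bigand. setoid_rewrite in_seq.
  split; intros [Hlt Hm]; split; auto; intros j Hj; apply Hlt; lia.
Qed.

Lemma closed_split_sentence m : closed (split_sentence m).
Proof.
  intros x [Hx | Hx]; [|exact Hx].
  revert Hx; apply closed_bigand; intros j _ y [].
Qed.

Lemma split_sentences_pw_inconsistent : pw_inconsistent split_sentence.
Proof.
  split; [exact closed_split_sentence|].
  intros m m' Hmm' S e [H H']. rewrite sat_split_sentence in H, H'.
  destruct (Nat.lt_gt_cases m m') as [[Hlt | Hgt] _]; [exact Hmm'|..].
  - apply (proj2 H), (proj1 H'), Hlt.
  - apply (proj2 H'), (proj1 H), Hgt.
Qed.

Definition split_dom (m : nat) (i : I) : Prop := A i \/ exists j, j <= m /\ i = a j.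
Definition split_val (m : nat) (i : I) : Prop := (A i /\ w i) \/ exists j, j < m /\ i = a j.

Lemma coinfinite_split_dom m : coinfinite (split_dom m).
Proof.
  intro l. destruct (A_coinf (l ++ map a (seq 0 (S m)))) as [i [Hi HAi]].
  exists i. rewrite in_app_iff in Hi. split; [tauto|].
  intros [HA | [j [Hj ->]]]; [contradiction|].
  apply Hi; right; apply in_map, in_seq; lia.
Qed.

Lemma subfamily_split_sentence m T :
  subfamily (constrained_by A w) (split_sentence m) T <->
  constrained_by (split_dom m) (split_val m) T.
Proof.
  assert (HvalA : forall i, A i -> (split_val m i <-> w i)).
  { intros i HAi; unfold split_val; split; [|left; auto].
    intros [[_ Hw] | [j [_ ->]]]; [exact Hw | contradiction (a_notin j)]. }
  assert (Hval_a : forall j, split_val m (a j) <-> j < m).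
  { intro j; unfold split_val; split; [|intro; right; eauto].
    intros [[HA _] | [j' [Hj' E]]]; [contradiction (a_notin j) | apply a_inj in E; lia]. }
  split.
  - intros [[S [-> HS]] [_ Hsplit]].
    destruct (proj1 (sat_split_sentence S (fun _ => point S) m) (Hsplit _)) as [Hlt Hm].
    exists S; split; [reflexivity|]. intros i [HAi | [j [Hj ->]]].
    + rewrite HvalA by exact HAi; apply HS, HAi.
    + rewrite Hval_a. split; [|apply Hlt]. intro Haj.
      destruct (Nat.eq_dec j m) as [-> | Hjm]; [contradiction | lia].
  - intros [S [-> HS]]. split.
    + exists S; split; [reflexivity|]. intros i HAi. rewrite <- HvalA by exact HAi.
      apply HS; left; exact HAi.
    + split; [apply closed_split_sentence|]. intro e. apply sat_split_sentence. split.
      * intros j Hj. apply HS; [right; exists j; split; [lia | reflexivity] | apply Hval_a, Hj].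
      * intro Ham. apply HS, Hval_a in Ham; [lia | right; exists m; auto].
Qed.

End Splitting.

Lemma coinfinitely_constrained_split {I : Type} (F : family I) : coinfinitely_constrained F ->
  exists phi : nat -> form I, pw_inconsistent phi /\
    forall m, coinfinitely_constrained (subfamily F (phi m)).
Proof.
  intros [A [w [HA HF]]].
  destruct (coinfinite_fresh_seq A HA) as [a [a_notin a_inj]].
  exists (split_sentence I a). split; [apply split_sentences_pw_inconsistent|].
  intro m. exists (split_dom I A a m), (split_val I A w a m).
  split; [apply coinfinite_split_dom; assumption|].
  intro T. rewrite <- subfamily_split_sentence by assumption.
  unfold subfamily; rewrite HF; reflexivity.
Qed.

Lemma coinfinitely_constrained_RS_ge {I : Type} (a : Ord) :
  forall F : family I, coinfinitely_constrained F -> RS_ge a F.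
Proof.
  assert (Hfin : forall F : family I, coinfinitely_constrained F ->
            exists v, forall s, F (Th (fin_structure s v))).
  { intros F [A [w [_ HF]]]. exists w. intro s. apply HF.
    exists (fin_structure s w); split; [reflexivity | simpl; tauto]. }
  induction a as [| b IH | X x f IH]; intros F HF.
  - destruct (Hfin F HF) as [v Hv]. exists (Th (fin_structure 0 v)); apply Hv.
  - destruct b as [| b | X x f].
    + destruct (Hfin F HF) as [v Hv]; exact (family_infinite_fin_structures v F Hv).
    + destruct (coinfinitely_constrained_split F HF) as [phi [Hphi Hsub]].
      exists phi; split; auto.
    + destruct (coinfinitely_constrained_split F HF) as [phi [Hphi Hsub]].
      exists phi; split; auto.
  - intro y; apply IH, HF.
Qed.

Lemma RS_infty_T_Sigma {I : Type} : ~ type_finite I -> RS_infty (T_Sigma I).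
Proof.
  intros Hinf a. apply coinfinitely_constrained_RS_ge.
  exists (fun _ => False), (fun _ => False). split.
  - intro l. apply NNPP; intro H. apply Hinf. exists l. intro i.
    apply NNPP; intro Hi. apply H. exists i; tauto.
  - intro T; split.
    + intros [S ->]. exists S; split; [reflexivity | intros _ []].
    + intros [S [-> _]]. exists S; reflexivity.
Qed.

Theorem proposition2p2 :
  forall I : Type,
    (forall n : nat, has_card I n ->
       RS_eq (T_Sigma I) Oone /\ ds_eq (T_Sigma I) Oone (2 ^ n)) /\
    (~ type_finite I -> RS_infty (T_Sigma I)).
Proof.
  intro I; split.
  - intros n [f [g [f_lt [g_f f_g]]]].
    split; [exact (RS_eq_T_Sigma I n f g f_lt g_f) | exact (ds_eq_T_Sigma I n f g f_lt g_f f_g)].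
  - apply RS_infty_T_Sigma.
Qed.
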